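(* Let $K\subset\mathbb{R}^n$ and $C\subset\mathbb{R}^m$ be nonempty, convex, closed and bounded sets, and let $f,h:\mathbb{R}^n\times\mathbb{R}^m\to\mathbb{R}$ be continuous functions such that, for every $y\in K$, $f(y,\cdot)$ and $h(y,\cdot)$ are convex, and such that $f$ takes only positive values. Let $\varepsilon>0$, let $y_\varepsilon$ be an optimal solution of $(\mathcal{P}_\varepsilon)$, let $y^*$ be an optimal solution of $(\widetilde{\mathcal{P}})$, let $x^*\in\mathcal{S}(y^* )$, and let $\tilde x_\varepsilon\in\mathcal{S}_\varepsilon(y^* )$. Then for every $x_\varepsilon\in\mathcal{S}_\varepsilon(y_\varepsilon)$, $$f(y^*,\tilde x_\varepsilon)\le f(y_\varepsilon,x_\varepsilon)\le f(y^*,x^* ).$$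
   Context: $f^2=(f)^2$. For $y\in K$: $\mathcal{S}(y)=\operatorname{argmin}\{h(y,z)\mid z\in C\}$; for $\varepsilon>0$, $\mathcal{S}_\varepsilon(y)=\operatorname{argmin}\{h(y,z)+\varepsilon f^2(y,z)\mid z\in C\}$; $\widetilde{\mathcal{S}}(y)=\operatorname{argmin}\{f^2(y,z)\mid z\in\mathcal{S}(y)\}$. $(\mathcal{P}_\varepsilon)$: maximize $f(y,x)$ over $y\in K$, $x\in\mathcal{S}_\varepsilon(y)$; $y_\varepsilon\in K$ is optimal if $f(y_\varepsilon,x')\ge f(y,x)$ for all $x'\in\mathcal{S}_\varepsilon(y_\varepsilon)$, $y\in K$, $x\in\mathcal{S}_\varepsilon(y)$. $(\widetilde{\mathcal{P}})$: maximize $f(y,x)$ over $y\in K$, $x\in\widetilde{\mathcal{S}}(y)$; $y^*\in K$ is optimal if $f(y^*,x')\ge f(y,x)$ for all $x'\in\widetilde{\mathcal{S}}(y^* )$, $y\in K$, $x\in\widetilde{\mathcal{S}}(y)$. *)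

From mathcomp Require Import all_boot all_order all_algebra.
From mathcomp Require Import all_classical all_reals all_analysis.
Set Implicit Arguments. Unset Strict Implicit. Unset Printing Implicit Defensive.
Import Order.TTheory GRing.Theory Num.Theory.
Import numFieldNormedType.Exports.
Local Open Scope classical_set_scope.
Local Open Scope ring_scope.

Definition argmin_set (T : Type) (R : realType) (g : T -> R) (D : set T) : set T :=
  [set z | D z /\ forall z', D z' -> g z <= g z'].

Section Bilevel.
Variables (R : realType) (n m : nat).
Variables (K : set 'rV[R]_n) (C : set 'rV[R]_m).
Variables (f h : 'rV[R]_n * 'rV[R]_m -> R).

Definition Ssol (y : 'rV[R]_n) : set 'rV[R]_m := argmin_set (fun z => h (y, z)) C.

Definition Seps (eps : R) (y : 'rV[R]_n) : set 'rV[R]_m :=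
  argmin_set (fun z => h (y, z) + eps * (f (y, z)) ^+ 2) C.

Definition Stilde (y : 'rV[R]_n) : set 'rV[R]_m :=
  argmin_set (fun z => (f (y, z)) ^+ 2) (Ssol y).

Definition optimal_Peps (eps : R) (ye : 'rV[R]_n) : Prop :=
  K ye /\ forall x' y x, Seps eps ye x' -> K y -> Seps eps y x -> f (y, x) <= f (ye, x').

Definition optimal_Ptilde (ys : 'rV[R]_n) : Prop :=
  K ys /\ forall x' y x, Stilde ys x' -> K y -> Stilde y x -> f (y, x) <= f (ys, x').
End Bilevel.

From mathcomp Require Import all_boot all_order all_algebra.
From mathcomp Require Import all_classical all_reals all_analysis.
From mathcomp Require Import lra.
Import Order.TTheory GRing.Theory Num.Theory.
Import numFieldNormedType.Exports.
Local Open Scope classical_set_scope.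
Local Open Scope ring_scope.

(* The lower bound is the optimality of [ye] tested against the feasible pair
   [(ys, xte)]. For the upper bound, pick [x1] in S~(ye) and [x2] in S~(ys).
   Since [xe] minimises h + eps f^2 over C while [x1] minimises h, the penalty
   gives f(ye, xe) <= f(ye, x1); optimality of [ys] gives
   f(ye, x1) <= f(ys, x2); and [x2] minimises f(ys, .) over S(ys), which
   contains [xs]. The sets S~(y) are nonempty by two applications of the
   extreme value theorem, the second one on the compact set S(y). *)

Section Argmin.
Context {T : topologicalType} {R : realType}.
Implicit Types (g p : T -> R) (D : set T).

Lemma argmin_set_nonempty {g D} :
  D !=set0 -> compact D -> continuous g -> argmin_set g D !=set0.
Proof.
move=> D0 cD cg.
have [c Dc cmin] := compact_EVT_min D0 cD (continuous_subspaceT cg).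
exists c; split; first by rewrite -inE.
by move=> z Dz; apply: cmin; rewrite inE.
Qed.

Lemma argmin_set_compact {g D} :
  D !=set0 -> compact D -> continuous g -> compact (argmin_set g D).
Proof.
move=> D0 cD cg.
have [c [Dc cmin]] := argmin_set_nonempty D0 cD cg.
have -> : argmin_set g D = D `&` g @^-1` [set r | r <= g c].
  apply/seteqP; split=> z /= [Dz zmin]; split=> //; first exact: zmin.
  by move=> z' Dz'; exact: le_trans zmin (cmin _ Dz').
apply: compact_closedI => //.
by move/continuous_closedP: cg; apply; exact: closed_le.
Qed.

Lemma argmin_set_sqr g D : (forall z, D z -> 0 <= g z) ->
  argmin_set (fun z => g z ^+ 2) D = argmin_set g D.
Proof.
move=> g_ge0; apply/seteqP; split=> z [Dz zmin]; split=> // z' Dz';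
  have := zmin _ Dz'; by rewrite ler_sqr ?nnegrE ?g_ge0.
Qed.

Lemma argmin_set_penalty_le {g p D} {eps : R} {x x'} : 0 < eps ->
  argmin_set (fun z => g z + eps * p z) D x -> argmin_set g D x' ->
  p x <= p x'.
Proof.
move=> eps_gt0 [Dx xmin] [Dx' x'min].
have := xmin _ Dx'; have := x'min _ Dx => gx'x gpx.
by rewrite -(ler_pM2l eps_gt0); lra.
Qed.

End Argmin.

Lemma continuous_section {T U V : topologicalType} {F : T * U -> V} (y : T) :
  continuous F -> continuous (fun z => F (y, z)).
Proof.
move=> Fc z; apply: (@continuous_comp _ _ _ (fun z => (y, z)) F); last exact: Fc.
exact: cvg_pair (cvg_cst y) cvg_id.
Qed.

Section Bilevel.
Context {R : realType} {n m : nat}.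
Context {C : set 'rV[R]_m} {f h : 'rV[R]_n * 'rV[R]_m -> R}.
Hypothesis fpos : forall p, 0 < f p.

Lemma Stilde_argmin y : Stilde C f h y = argmin_set (fun z => f (y, z)) (Ssol C h y).
Proof. by apply: argmin_set_sqr => z _; exact/ltW. Qed.

Lemma Stilde_nonempty y : C !=set0 -> compact C ->
  continuous f -> continuous h -> Stilde C f h y !=set0.
Proof.
move=> C0 cC fc hc; rewrite Stilde_argmin.
have hyc := continuous_section y hc.
apply: argmin_set_nonempty (continuous_section y fc).
- exact: argmin_set_nonempty C0 cC hyc.
- exact: argmin_set_compact C0 cC hyc.
Qed.

Lemma Stilde_le_Ssol {y x x'} : Stilde C f h y x -> Ssol C h y x' -> f (y, x) <= f (y, x').
Proof. by rewrite Stilde_argmin => -[_ xmin]; apply: xmin. Qed.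

Lemma Seps_le_Ssol {eps : R} {y x x'} : 0 < eps ->
  Seps C f h eps y x -> Ssol C h y x' -> f (y, x) <= f (y, x').
Proof.
move=> eps_gt0 xe x'S.
have := argmin_set_penalty_le eps_gt0 xe x'S.
by rewrite ler_sqr // nnegrE ltW.
Qed.

End Bilevel.

Theorem lemma4p3 (R : realType) (n m : nat)
  (K : set 'rV[R]_n) (C : set 'rV[R]_m)
  (f h : 'rV[R]_n * 'rV[R]_m -> R)
  (K0 : K !=set0) (Kcvx : convex_set K) (Kcl : closed K) (Kbd : bounded_set K)
  (C0 : C !=set0) (Ccvx : convex_set C) (Ccl : closed C) (Cbd : bounded_set C)
  (fcont : continuous f) (hcont : continuous h)
  (fcvx : forall y, K y -> convex_function setT (fun z : 'rV[R]_m => f (y, z)))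
  (hcvx : forall y, K y -> convex_function setT (fun z : 'rV[R]_m => h (y, z)))
  (fpos : forall p, 0 < f p)
  (eps : R) (eps_gt0 : 0 < eps)
  (ye ys : 'rV[R]_n) (xs xte : 'rV[R]_m)
  (hye : optimal_Peps K C f h eps ye)
  (hys : optimal_Ptilde K C f h ys)
  (hxs : Ssol C h ys xs)
  (hxte : Seps C f h eps ys xte) :
  forall xe, Seps C f h eps ye xe ->
    f (ys, xte) <= f (ye, xe) <= f (ys, xs).
Proof.
move=> xe hxe; have [Kye optye] := hye; have [Kys optys] := hys.
apply/andP; split; first exact: optye.
have cC : compact C := bounded_closed_compact Cbd Ccl.
have [x1 x1S] := Stilde_nonempty fpos ye C0 cC fcont hcont.
have [x2 x2S] := Stilde_nonempty fpos ys C0 cC fcont hcont.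
have le_e1 := Seps_le_Ssol fpos eps_gt0 hxe (proj1 x1S).
have le_12 : f (ye, x1) <= f (ys, x2) by exact: optys.
have le_2s := Stilde_le_Ssol fpos x2S hxs.
exact: (le_trans le_e1 (le_trans le_12 le_2s)).
Qed.
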